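(* Let $(X,\ell)$ and $(Y,\ell')$ be filtered vector spaces over a field $\kappa$ such that $\ell(X\setminus\{0\})$ and $\ell'(Y\setminus\{0\})$ are well-ordered subsets of $\mathbb{R}$, and let $\phi\colon X\to Y$ be a $\kappa$-linear isomorphism. Then there is an $\ell$-orthogonal basis $\{v_\alpha\}$ of $X$ such that $\{\phi(v_\alpha)\}$ is an $\ell'$-orthogonal basis of $Y$.
   Context: A filtered vector space over a field $\kappa$ is a pair $(V,\ell)$ with $V$ a $\kappa$-vector space and $\ell\colon V\to\mathbb{R}\cup\{-\infty\}$ such that $\ell(v)=-\infty$ iff $v=0$, $\ell(cv)=\ell(v)$ for $c\in\kappa\setminus\{0\}$, and $\ell(v+w)\le\max\{\ell(v),\ell(w)\}$. A subset $S\subset V\setminus\{0\}$ is $\ell$-orthogonal if $\ell(\sum_{i=1}^n c_iv_i)=\max\{\ell(v_i):c_i\neq0\}$ for all finitely many distinct $v_1,\dots,v_n\in S$ and $c_i\in\kappa$. *)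

(* vector spaces are MathComp lmodTypes over a fieldType K
   (possibly infinite-dimensional); filtration values live in \bar R. *)
From HB Require Import structures.
From mathcomp Require Import all_boot all_order all_algebra.
From mathcomp Require Import boolp classical_sets reals constructive_ereal.

Set Implicit Arguments.
Unset Strict Implicit.
Unset Printing Implicit Defensive.

Import Order.TTheory GRing.Theory Num.Theory.
Local Open Scope classical_set_scope.
Local Open Scope ring_scope.

Section Filtered.
Variables (R : realType) (K : fieldType) (V : lmodType K).

Definition filtration (l : V -> \bar R) : Prop :=
  [/\ forall v, l v != +oo%E,
      forall v, (l v == -oo%E) = (v == 0),
      forall (c : K) v, c != 0 -> l (c *: v) = l v &
      forall v w, (l (v + w)%R <= Order.max (l v) (l w))%E].

Definition filt_values (l : V -> \bar R) : set R :=
  [set r | exists v, v != 0 /\ l v = r%:E].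

Definition well_ordered (A : set R) : Prop :=
  forall B : set R, B `<=` A -> B !=set0 ->
    exists b, B b /\ forall x, B x -> b <= x.

Definition l_orthogonal (l : V -> \bar R) (S : set V) : Prop :=
  (forall v, S v -> v != 0) /\
  forall (s : seq V) (c : V -> K), uniq s -> (forall v, v \in s -> S v) ->
    l (\sum_(v <- s) c v *: v) = \big[Order.max/-oo%E]_(v <- s | c v != 0) l v.

Definition lin_indep (S : set V) : Prop :=
  forall (s : seq V) (c : V -> K), uniq s -> (forall v, v \in s -> S v) ->
    \sum_(v <- s) c v *: v = 0 -> forall v, v \in s -> c v = 0.

Definition spanning (S : set V) : Prop :=
  forall x : V, exists (s : seq V) (c : V -> K),
    [/\ uniq s, (forall v, v \in s -> S v) & x = \sum_(v <- s) c v *: v].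

Definition is_basis (S : set V) : Prop := lin_indep S /\ spanning S.

End Filtered.

From HB Require Import structures.
From mathcomp Require Import all_boot all_order all_algebra.
From mathcomp Require Import boolp classical_sets reals constructive_ereal.
Import Order.TTheory GRing.Theory Num.Theory.
Local Open Scope classical_set_scope.
Local Open Scope ring_scope.

Set Implicit Arguments.
Unset Strict Implicit.
Unset Printing Implicit Defensive.

(* Transporting l' along phi, it suffices to find a basis of X that is
   orthogonal for the two filtrations l1 = l and l2 = l' \o phi at once.
   Call B free modulo lower terms when no nontrivial combination of vectors of
   B sharing the levels (sg, tau) is a sum a + b with l1 a < sg, l2 a <= tau,
   l1 b <= sg and l2 b < tau.  Such a B is orthogonal for both filtrations:
   in a combination whose l1-level drops, the terms of maximal l1-level and,
   among them, of maximal l2-level would violate freeness.  Freeness survives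
   unions of chains, so Zorn's lemma yields a maximal free B, and a vector
   that is not a combination of B modulo lower terms could be added to it;
   by well-founded induction on the values of l1, then of l2, B spans X. *)

Lemma bigmax_seq_attained d (T : orderType d) (I : eqType) (x0 : T)
    (r : seq I) (P : pred I) (F : I -> T) :
  \big[Order.max/x0]_(i <- r | P i) F i = x0 \/
  exists2 i, (i \in r) && P i & \big[Order.max/x0]_(i <- r | P i) F i = F i.
Proof.
rewrite big_seq_cond.
apply: (big_ind (fun y => y = x0 \/ exists2 i, (i \in r) && P i & y = F i)) => //.
- by left.
- by move=> y z hy hz; rewrite maxEle; case: ifP.
- by move=> i iP; right; exists i.
Qed.

Lemma well_ordered_sub (R : realType) (A B : set R) :
  A `<=` B -> well_ordered B -> well_ordered A.
Proof. by move=> AB woB C CA; apply: woB; apply: subset_trans AB. Qed.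

Section Filtration.
Variables (R : realType) (K : fieldType) (X : lmodType K) (l : X -> \bar R).
Hypothesis fl : filtration l.

Lemma filt0 : l 0 = -oo%E.
Proof. by case: fl => _ h _ _; apply/eqP; rewrite h. Qed.

Lemma filt_eqNy v : (l v == -oo%E) = (v == 0).
Proof. by case: fl. Qed.

Lemma filtZ (c : K) v : c != 0 -> l (c *: v) = l v.
Proof. by case: fl => _ _ h _; apply: h. Qed.

Lemma filtN v : l (- v) = l v.
Proof. by rewrite -scaleN1r filtZ // oppr_eq0 oner_eq0. Qed.

Lemma filtD v w : (l (v + w) <= Order.max (l v) (l w))%E.
Proof. by case: fl. Qed.

Lemma filtB v w : (l (v - w) <= Order.max (l v) (l w))%E.
Proof. by rewrite -(filtN w) filtD. Qed.

Lemma filt_fin v : v != 0 -> exists r, l v = r%:E.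
Proof.
case: fl => hp hm _ _ vn0; move: (hp v) (hm v); rewrite (negbTE vn0).
by case: (l v) => [r| |] //= _ _; exists r.
Qed.

Lemma filt_gtNy v : v != 0 -> (-oo < l v)%E.
Proof. by move=> /filt_fin [r ->]; rewrite ltNyr. Qed.

Lemma filt_comb_le (s : seq X) (P : pred X) (c : X -> K) b :
  (forall v, v \in s -> P v -> c v != 0 -> (l v <= b)%E) ->
  (l (\sum_(v <- s | P v) c v *: v) <= b)%E.
Proof.
move=> h; rewrite big_seq_cond.
apply: (big_ind (fun x => l x <= b)%E) => [|x y hx hy|v /andP[vs Pv]].
- by rewrite filt0 leNye.
- by apply: le_trans (filtD _ _) _; rewrite ge_max hx hy.
- by have [->|cv] := eqVneq (c v) 0; rewrite ?scale0r ?filt0 ?leNye ?filtZ ?h.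
Qed.

Lemma filt_comb_lt (s : seq X) (P : pred X) (c : X -> K) b : (-oo < b)%E ->
  (forall v, v \in s -> P v -> c v != 0 -> (l v < b)%E) ->
  (l (\sum_(v <- s | P v) c v *: v) < b)%E.
Proof.
move=> hb h; rewrite big_seq_cond.
apply: (big_ind (fun x => l x < b)%E) => [|x y hx hy|v /andP[vs Pv]].
- by rewrite filt0.
- by apply: le_lt_trans (filtD _ _) _; rewrite gt_max hx hy.
- by have [->|cv] := eqVneq (c v) 0; rewrite ?scale0r ?filt0 ?filtZ ?h.
Qed.

Lemma filt_comb_le_bigmax (s : seq X) (c : X -> K) :
  (l (\sum_(v <- s) c v *: v) <= \big[Order.max/-oo%E]_(v <- s | (c v != 0)%R) l v)%E.
Proof. by apply: filt_comb_le => v vs _ cv; apply: le_bigmax_seq. Qed.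

Lemma filtration_ind (P : X -> Prop) : well_ordered (filt_values l) ->
  (forall v, (forall w, (l w < l v)%E -> P w) -> P v) -> forall v, P v.
Proof.
move=> wo IH.
have P0 : P 0 by apply: IH => u; rewrite filt0 ltNge leNye.
move=> v; apply: contrapT => nPv.
pose B := [set r | exists w, l w = r%:E /\ ~ P w].
have BA : B `<=` filt_values l.
  by move=> r [w [e nPw]]; exists w; split => //; apply/eqP => w0; rewrite w0 in nPw.
have [b [[u [eu nPu]] bmin]] : exists b, B b /\ forall x, B x -> b <= x.
  apply: wo BA _; have [v0|/filt_fin [r e]] := eqVneq v 0; first by rewrite v0 in nPv.
  by exists r, v.
apply: nPu; apply: (IH) => w hw; apply: contrapT => nPw.
have [w0|/filt_fin [r e]] := eqVneq w 0; first by rewrite w0 in nPw.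
have : b <= r by apply: bmin; exists w.
by rewrite -lee_fin -e -eu leNgt hw.
Qed.

End Filtration.

Section Span.
Variables (K : fieldType) (X : lmodType K).

Definition in_span (B : set X) (x : X) : Prop :=
  exists r : seq (K * X), (forall p, p \in r -> B p.2) /\
    x = \sum_(p <- r) p.1 *: p.2.

Lemma in_span0 B : in_span B 0.
Proof. by exists [::]; rewrite big_nil. Qed.

Lemma in_spanD B x y : in_span B x -> in_span B y -> in_span B (x + y).
Proof.
move=> [r1 [h1 ->]] [r2 [h2 ->]]; exists (r1 ++ r2); split; last by rewrite big_cat.
by move=> p; rewrite mem_cat => /orP[/h1|/h2].
Qed.

Lemma in_span_comb B (s : seq X) (c : X -> K) :
  (forall v, v \in s -> B v) -> in_span B (\sum_(v <- s) c v *: v).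
Proof.
move=> h; exists [seq (c v, v) | v <- s]; split; last by rewrite big_map.
by move=> p /mapP [q qr ->]; exact: (h q qr).
Qed.

Lemma in_span_uniq_comb B x : in_span B x -> exists (s : seq X) (c : X -> K),
  [/\ uniq s, (forall v, v \in s -> B v) & x = \sum_(v <- s) c v *: v].
Proof.
move=> [r [h ->]]; elim: r h => [|[k v] r ih] h.
  by exists [::], (fun _ => 0); rewrite !big_nil.
rewrite big_cons /=.
have [|s [c [us sB ->]]] := ih; first by move=> p pr; apply: h; rewrite inE pr orbT.
have Bv : B v by apply: (h (k, v)); rewrite inE eqxx.
have [vs|vns] := boolP (v \in s).
  exists s, (fun w => if w == v then c w + k else c w); split => //.
  rewrite (big_rem v vs) [in RHS](big_rem v vs) /= eqxx scalerDl addrCA addrA.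
  congr (_ + _); apply: eq_big_seq => w; rewrite mem_rem_uniq // => /andP[wv _].
  by rewrite (negbTE wv).
exists (v :: s), (fun w => if w == v then k else c w); split.
- by rewrite /= vns us.
- by move=> w; rewrite inE => /predU1P[->//|]; exact: sB.
rewrite big_cons eqxx; congr (_ + _); apply: eq_big_seq => w ws.
by case: eqP => // wv; move: ws; rewrite wv (negbTE vns).
Qed.

End Span.

Lemma bigcup_chain_seq (T : eqType) (F : set (set T)) (s : seq T) :
  total_on F subset -> (forall v, v \in s -> (\bigcup_(A in F) A) v) ->
  s = [::] \/ exists2 A, F A & forall v, v \in s -> A v.
Proof.
move=> tot; elim: s => [|h t ih] hs; first by left.
right; have [A FA Ah] := hs h (mem_head _ _).
case: ih => [v vt|->|[B FB Bt]]; first by apply: hs; rewrite inE vt orbT.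
  by exists A => // v; rewrite inE => /eqP ->.
have [AB|BA] := tot _ _ FA FB.
  by exists B => // v; rewrite inE => /predU1P[->|/Bt //]; exact: AB.
by exists A => // v; rewrite inE => /predU1P[->//|/Bt]; exact: BA.
Qed.

Lemma orthogonal_lin_indep (R : realType) (K : fieldType) (X : lmodType K)
    (l : X -> \bar R) (B : set X) :
  filtration l -> l_orthogonal l B -> lin_indep B.
Proof.
move=> fl [B0 oB] s c us sB e v vs; apply/eqP; apply: contraT => cv.
have : (l v <= -oo)%E.
  by rewrite -(filt0 fl) -e oB //; apply: le_bigmax_seq.
by rewrite leeNy_eq filt_eqNy // (negbTE (B0 v (sB v vs))).
Qed.

Section FreeModLower.
Variables (R : realType) (K : fieldType) (X : lmodType K).

Definition free_mod_lower (l1 l2 : X -> \bar R) (B : set X) : Prop :=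
  (forall v, B v -> v != 0) /\
  forall (sg tau : \bar R) (s : seq X) (c : X -> K) (a b : X), uniq s ->
    (forall v, v \in s -> [/\ B v, l1 v = sg & l2 v = tau]) ->
    (l1 a < sg)%E -> (l2 a <= tau)%E -> (l1 b <= sg)%E -> (l2 b < tau)%E ->
    \sum_(v <- s) c v *: v = a + b -> forall v, v \in s -> c v = 0.

Lemma free_mod_lower_sym l1 l2 B : free_mod_lower l1 l2 B -> free_mod_lower l2 l1 B.
Proof.
move=> [B0 fB]; split => // sg tau s c a b us hs ha1 ha2 hb1 hb2 e.
apply: (fB tau sg s c b a us) => //; last by rewrite addrC.
by move=> v /hs [].
Qed.

Variables (l1 l2 : X -> \bar R).
Hypotheses (f1 : filtration l1) (f2 : filtration l2).

Lemma free_mod_lower_leading B (s : seq X) (c : X -> K) sg tau :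
  free_mod_lower l1 l2 B -> uniq s -> (forall v, v \in s -> B v) ->
  (forall v, v \in s -> c v != 0 -> (l1 v <= sg)%E) ->
  (forall v, v \in s -> c v != 0 -> l1 v = sg -> (l2 v <= tau)%E) ->
  (l1 (\sum_(v <- s) c v *: v) < sg)%E ->
  forall v, v \in s -> l1 v = sg -> l2 v = tau -> c v = 0.
Proof.
move=> [B0 fB] us sB hl1 hl2 hx v vs l1v l2v.
have sgNy : (-oo < sg)%E := le_lt_trans (leNye _) hx.
have tauNy : (-oo < tau)%E by rewrite -l2v filt_gtNy // B0 //; exact: sB.
pose top w := (l1 w == sg) && (l2 w == tau).
(* The top part of the combination is a + b, with [a] of l1-level < sg
   (it differs from the whole sum by terms below sg) and [b] of l2-level < tau. *)
set a := \sum_(w <- s | l1 w == sg) c w *: w.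
set b := - \sum_(w <- s | (l1 w == sg) && (l2 w != tau)) c w *: w.
apply: (fB sg tau (filter top s) c a b (filter_uniq _ us)).
- move=> w; rewrite mem_filter => /andP[/andP[/eqP l1w /eqP l2w] ws].
  by split => //; exact: sB.
- have -> : a = \sum_(w <- s) c w *: w - \sum_(w <- s | l1 w != sg) c w *: w.
    by rewrite (bigID (fun w => l1 w == sg)) /= addrK.
  apply: le_lt_trans (filtB f1 _ _) _; rewrite gt_max hx /=.
  by apply: filt_comb_lt => // w ws ne cw; rewrite lt_neqAle ne hl1.
- by apply: filt_comb_le => // w ws /eqP l1w cw; apply: hl2.
- by rewrite filtN //; apply: filt_comb_le => // w ws /andP[/eqP -> _].
- rewrite filtN //; apply: filt_comb_lt => // w ws /andP[/eqP l1w ne] cw.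
  by rewrite lt_neqAle ne hl2.
- by rewrite big_filter /a /b (bigID (fun w => l2 w == tau) (fun w => l1 w == sg)) /= addrK.
- by rewrite mem_filter /top l1v l2v !eqxx.
Qed.

Lemma free_mod_lower_orthogonal B : free_mod_lower l1 l2 B -> l_orthogonal l1 B.
Proof.
move=> fB; split => [|s c us sB]; first exact: fB.1.
apply/le_anti; rewrite filt_comb_le_bigmax //=.
have [->|[v0 /andP[v0s cv0] sgE]] :=
  bigmax_seq_attained -oo%E s (fun v => c v != 0) l1; first exact: leNye.
rewrite sgE leNgt; apply/negP => hx.
pose top1 v := (c v != 0) && (l1 v == l1 v0).
have [tauE|[v1 /andP[v1s /andP[cv1 /eqP l1v1]] tauE]] :=
  bigmax_seq_attained -oo%E s top1 l2.
  have : (l2 v0 <= -oo)%E.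
    by rewrite -tauE; apply: le_bigmax_seq => //; rewrite /top1 cv0 eqxx.
  by rewrite leeNy_eq filt_eqNy // (negbTE (fB.1 _ (sB _ v0s))).
apply/negP: cv1; apply/negPn/eqP.
apply: (free_mod_lower_leading fB us sB _ _ hx v1s l1v1 erefl).
  by move=> v vs cv; rewrite -sgE; apply: le_bigmax_seq.
by move=> v vs cv e; rewrite -tauE; apply: le_bigmax_seq => //; rewrite /top1 cv e eqxx.
Qed.

Lemma free_mod_lower_bigcup (F : set (set X)) :
  F `<=` free_mod_lower l1 l2 -> total_on F subset ->
  free_mod_lower l1 l2 (\bigcup_(A in F) A).
Proof.
move=> FP tot; split; first by move=> v [A FA Av]; exact: (FP A FA).1.
move=> sg tau s c a b us hs ha1 ha2 hb1 hb2 e.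
have [v /hs []//|->//|[A FA sA]] := bigcup_chain_seq tot (s := s).
apply: (FP A FA).2 us _ ha1 ha2 hb1 hb2 e.
by move=> v vs; have [_ ? ?] := hs v vs; split => //; exact: sA.
Qed.

Definition reducible_mod_lower (A : set X) (u : X) : Prop :=
  exists (s : seq X) (c : X -> K) (a b : X),
    [/\ forall w, w \in s -> [/\ A w, l1 w = l1 u & l2 w = l2 u],
        (l1 a < l1 u)%E /\ (l2 a <= l2 u)%E, (l1 b <= l1 u)%E /\ (l2 b < l2 u)%E &
        u = \sum_(w <- s) c w *: w + a + b].

Lemma reducible_mod_lower_comb A u (s : seq X) (c : X -> K) a b :
  uniq s -> u \in s -> c u != 0 ->
  (forall w, w \in s -> w != u -> [/\ A w, l1 w = l1 u & l2 w = l2 u]) ->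
  (l1 a < l1 u)%E -> (l2 a <= l2 u)%E -> (l1 b <= l1 u)%E -> (l2 b < l2 u)%E ->
  \sum_(w <- s) c w *: w = a + b -> reducible_mod_lower A u.
Proof.
move=> us uins cu hs ha1 ha2 hb1 hb2 e.
have cuV : (c u)^-1 != 0 by rewrite invr_eq0.
exists [seq w <- s | w != u], (fun w => - ((c u)^-1 * c w)).
exists ((c u)^-1 *: a), ((c u)^-1 *: b); rewrite !filtZ //; split => //.
  by move=> w; rewrite mem_filter => /andP[wu ws]; apply: hs.
rewrite (bigD1_seq u uins us) /= in e.
set k := c u in cu cuV e *.
rewrite {1}(_ : u = k^-1 *: (a + b - \sum_(w <- s | w != u) c w *: w)); last first.
  by rewrite -e addrK scalerA mulVf // scale1r.
rewrite big_filter scalerBr scalerDr scaler_sumr -sumrN [LHS]addrC addrA; congr (_ + _ + _).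
by apply: eq_bigr => w _; rewrite scaleNr scalerA.
Qed.

Lemma free_mod_lowerU1 A u : free_mod_lower l1 l2 A -> u != 0 ->
  ~ reducible_mod_lower A u -> free_mod_lower l1 l2 (A `|` [set u]).
Proof.
move=> [A0 fA] u0 nred; split; first by move=> v [/A0 //|->].
move=> sg tau s c a b us hs ha1 ha2 hb1 hb2 e.
have [/andP[uins cu]|hu] := boolP ((u \in s) && (c u != 0)).
  have [_ l1u l2u] := hs u uins; subst sg tau; case: nred.
  apply: (reducible_mod_lower_comb us uins cu _ ha1 ha2 hb1 hb2 e) => w ws wu.
  by have [[Aw|wu'] ? ?] := hs w ws; last by rewrite wu' eqxx in wu.
have cu0 : u \in s -> c u = 0 by move=> uins; move: hu; rewrite uins negbK => /eqP.
have e' : \sum_(v <- [seq v <- s | v != u]) c v *: v = a + b.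
  rewrite big_filter -e [in RHS](bigID (fun v => v != u)) /=.
  rewrite [X in _ = _ + X]big1_seq ?addr0 // => w /andP[/negPn/eqP -> uins].
  by rewrite cu0 // scale0r.
move=> v vs; have [vu|vu] := eqVneq v u; first by subst v; exact: cu0.
apply: (fA sg tau _ c a b (filter_uniq _ us) _ ha1 ha2 hb1 hb2 e'); last by rewrite mem_filter vu.
move=> w; rewrite mem_filter => /andP[wu ws].
by have [[Aw|wu'] ? ?] := hs w ws; last by rewrite wu' eqxx in wu.
Qed.

Hypotheses (wo1 : well_ordered (filt_values l1)) (wo2 : well_ordered (filt_values l2)).

Lemma maximal_free_mod_lower_span A : free_mod_lower l1 l2 A ->
  (forall B, A `<` B -> ~ free_mod_lower l1 l2 B) -> forall v, in_span A v.
Proof.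
move=> fA maxA; apply: (filtration_ind f1 wo1) => v IH1.
suff : forall u, (l1 u <= l1 v)%E -> in_span A u by apply.
apply: (filtration_ind f2 wo2) => u IH2.
rewrite le_eqVlt => /orP[/eqP l1u|]; last exact: IH1.
have [Au|nAu] := pselect (A u).
  have -> : u = \sum_(w <- [:: u]) 1 *: w by rewrite big_seq1 scale1r.
  by apply: in_span_comb => w; rewrite inE => /eqP ->.
have [->|u0] := eqVneq u 0; first exact: in_span0.
have [[s [c [a [b [sA [ha1 ha2] [hb1 hb2] ->]]]]]|nred] :=
  pselect (reducible_mod_lower A u).
  apply: in_spanD; first apply: in_spanD.
  - by apply: in_span_comb => w /sA [].
  - by apply: IH1; rewrite -l1u.
  - by apply: IH2 => //; rewrite -l1u.
case: (maxA (A `|` [set u])); last exact: free_mod_lowerU1.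
by split => [|sub]; [exact: subsetUl | apply: nAu; apply: sub; right].
Qed.

End FreeModLower.

Lemma exists_basis_orthogonal2 (R : realType) (K : fieldType) (X : lmodType K)
    (l1 l2 : X -> \bar R) :
  filtration l1 -> filtration l2 ->
  well_ordered (filt_values l1) -> well_ordered (filt_values l2) ->
  exists B : set X, [/\ is_basis B, l_orthogonal l1 B & l_orthogonal l2 B].
Proof.
move=> f1 f2 wo1 wo2.
have [A [fA maxA]] := Zorn_bigcup (free_mod_lower_bigcup (l1 := l1) (l2 := l2)).
have o1 := free_mod_lower_orthogonal f1 f2 fA.
have o2 := free_mod_lower_orthogonal f2 f1 (free_mod_lower_sym fA).
exists A; split => //; split; first exact: orthogonal_lin_indep f1 o1.
by move=> x; apply: in_span_uniq_comb; exact: (maximal_free_mod_lower_span f1 f2 wo1 wo2 fA maxA).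
Qed.

Section Image.
Variables (R : realType) (K : fieldType) (X Y : lmodType K) (phi : {linear X -> Y}).
Variable l' : Y -> \bar R.

Lemma linear_eq0 : injective phi -> forall x, (phi x == 0) = (x == 0).
Proof. by move=> inj x; rewrite -(raddf0 phi) (inj_eq inj). Qed.

Lemma filtration_comp : injective phi -> filtration l' -> filtration (l' \o phi).
Proof.
move=> inj fl'; split => [v|v|c v c0|v w] /=.
- by case: fl'.
- by rewrite filt_eqNy // linear_eq0.
- by rewrite linearZ filtZ.
- by rewrite linearD filtD.
Qed.

Lemma filt_values_comp : injective phi -> filt_values (l' \o phi) `<=` filt_values l'.
Proof. by move=> inj r [v [v0 e]]; exists (phi v); rewrite linear_eq0. Qed.

Variable g : Y -> X.
Hypotheses (phiK : cancel phi g) (gK : cancel g phi).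

Lemma orthogonal_image B : l_orthogonal (l' \o phi) B -> l_orthogonal l' (phi @` B).
Proof.
have inj := can_inj phiK; move=> [B0 oB]; split.
  by move=> _ [b Bb <-]; rewrite linear_eq0 //; exact: B0.
move=> s c us sB; set t := map g s.
have ut : uniq t by rewrite map_inj_uniq //; exact: can_inj gK.
have tB : forall x, x \in t -> B x.
  by move=> x /mapP [y /sB [b Bb <-] ->]; rewrite phiK.
have -> : s = map phi t by rewrite -map_comp (eq_map gK) map_id.
clearbody t; rewrite !big_map; move: (oB _ (fun x => c (phi x)) ut tB) => /= <-.
by rewrite linear_sum; congr (l' _); apply: eq_bigr => x _; rewrite linearZ.
Qed.

Lemma spanning_image B : spanning B -> spanning (phi @` B).
Proof.
move=> spB y; have [s [c [us sB e]]] := spB (g y).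
exists (map phi s), (fun y' => c (g y')); split.
- by rewrite map_inj_uniq //; exact: can_inj phiK.
- by move=> _ /mapP [x xs ->]; exists x => //; exact: sB.
- rewrite big_map -{1}(gK y) e linear_sum; apply: eq_bigr => x _.
  by rewrite linearZ /= phiK.
Qed.

End Image.

Unset Implicit Arguments.
Set Strict Implicit.

Theorem proposition3p19 (R : realType) (K : fieldType) (X Y : lmodType K)
    (l : X -> \bar R) (l' : Y -> \bar R) (phi : {linear X -> Y}) :
  filtration l -> filtration l' ->
  well_ordered (filt_values l) -> well_ordered (filt_values l') ->
  bijective phi ->
  exists B : set X,
    [/\ is_basis B, l_orthogonal l B,
        is_basis (phi @` B) & l_orthogonal l' (phi @` B)].
Proof.
move=> fl fl' wo wo' [g phiK gK].
have inj := can_inj phiK.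
have fl2 := filtration_comp inj fl'.
have wo2 := well_ordered_sub (filt_values_comp inj) wo'.
have [B [basB oB oB2]] := exists_basis_orthogonal2 fl fl2 wo wo2.
have oB' := orthogonal_image phiK gK oB2.
exists B; split => //; split; first exact: (orthogonal_lin_indep fl' oB').
exact: (spanning_image phiK gK basB.2).
Qed.
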